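(* Let $K$ be an arbitrary field, $n\ge1$, and $m=\lfloor n/2\rfloor+1$. Then every $m\times m$ minor of the generic matrix $\Phi$ lies in the ideal of $A$ generated by $T_1,\dots,T_n$ and the entries of $\Phi^2$.
   Context: $A=K[\Phi_{a,b}:1\le a,b\le n]$ is the polynomial ring in the entries of the generic $n\times n$ matrix $\Phi$, and $T_i$ is the sum of all principal $i\times i$ minors of $\Phi$. *)

From HB Require Import structures.
From mathcomp Require Import all_boot all_order all_algebra.
From mathcomp Require Import mpoly.
Set Implicit Arguments. Unset Strict Implicit. Unset Printing Implicit Defensive.
Import GRing.Theory.
Local Open Scope ring_scope.

Definition polyA (K : fieldType) (n : nat) := {mpoly K[n * n]}.

Definition generic_mx (K : fieldType) (n : nat) : 'M[{mpoly K[n * n]}]_n :=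
  \matrix_(a < n, b < n) 'X_(mxvec_index a b).

(* strictly increasing maps 'I_k -> 'I_n, i.e. k-element subsets of 'I_n *)
Definition incr (k n : nat) (f : {ffun 'I_k -> 'I_n}) : bool :=
  [forall i : 'I_k, forall j : 'I_k, (i < j)%N ==> (f i < f j)%N].

Definition minor (R : comNzRingType) (n k : nat) (M : 'M[R]_n)
  (r c : {ffun 'I_k -> 'I_n}) : R := \det (mxsub r c M).

Definition Tsum (R : comNzRingType) (n : nat) (M : 'M[R]_n) (k : nat) : R :=
  \sum_(f : {ffun 'I_k -> 'I_n} | incr f) minor M f f.

Definition in_ideal (R : comNzRingType) (gens : seq R) (x : R) : Prop :=
  exists cs : seq R, size cs = size gens /\
    x = \sum_(i < size gens) cs`_i * gens`_i.

Definition lemma4_gens (K : fieldType) (n : nat) : seq {mpoly K[n * n]} :=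
  [seq Tsum (generic_mx K n) k.+1 | k <- iota 0 n] ++
  [seq (generic_mx K n *m generic_mx K n) ij.1 ij.2 | ij <- enum {: 'I_n * 'I_n}].
Arguments generic_mx K n : clear implicits.
Arguments lemma4_gens K n : clear implicits.

From HB Require Import structures.
From mathcomp Require Import all_boot all_order all_algebra.
From mathcomp Require Import mpoly.
From mathcomp Require Import perm generic_quotient ring_quotient zify.
From Stdlib Require Import Classical ClassicalEpsilon.
Set Implicit Arguments. Unset Strict Implicit. Unset Printing Implicit Defensive.
Import GRing.Theory.
Local Open Scope ring_scope.
Local Open Scope quotient_scope.

(* Modulo the ideal, Phi becomes a matrix N with N^2 = 0 and all T_i = 0; as
   the T_i are, up to sign, the coefficients of the characteristic polynomial,
   det (X - N) = X^n.  From (X - N)(X + N) = X^2, Jacobi's complementary minor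
   identity shows that det (X - N) times any m x m minor of X + N is divisible
   by X^(2m).  As 2m > n, comparing coefficients of X^n gives that the constant
   term of that minor, i.e. the corresponding minor of N, vanishes. *)

Lemma perm_extend_lshift k l (f : 'I_k -> 'I_(k + l)) : injective f ->
  exists p : 'S_(k + l), forall i, p (lshift l i) = f i.
Proof.
move=> f_inj.
have card_compl : l = #|[predC codom f]|.
  have := cardC (mem (codom f)); rewrite card_codom // !card_ord.
  by move/eqP; rewrite eqn_add2l => /eqP.
pose g (j : 'I_l) : 'I_(k + l) := enum_val (cast_ord card_compl j).
have g_compl j : g j \notin codom f by have := enum_valP (cast_ord card_compl j).
pose h (x : 'I_k + 'I_l) := match x with inl i => f i | inr j => g j end.
have h_inj : injective h.
  case=> [i|j] [i'|j'] //= e.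
  - by rewrite (f_inj _ _ e).
  - by have := g_compl j'; rewrite -e codom_f.
  - by have := g_compl j; rewrite e codom_f.
  - by move/enum_val_inj/cast_ord_inj: e => ->.
have hs_inj : injective (h \o split).
  by move=> x y /h_inj e; rewrite -(splitK x) -(splitK y) e.
exists (perm hs_inj) => i; rewrite permE /=.
by rewrite -[lshift l i]/(unsplit (inl i)) unsplitK.
Qed.

Lemma det_row_col_perm (R : comNzRingType) n (p : 'S_n) (A : 'M[R]_n) :
  \det (row_perm p (col_perm p A)) = \det A.
Proof.
rewrite row_permE col_permE !det_mulmx !det_perm odd_permV [\det A * _]mulrC.
by rewrite mulrA -signr_addb addbb mul1r.
Qed.

Definition patch_mx (R : nzRingType) n (g : 'I_n -> bool) (t : R) (M : 'M[R]_n) :=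
  \matrix_(i, j) if g i then M i j else t *+ (i == j).

Section PatchDeterminant.
Variable R : comNzRingType.
Implicit Types (t : R).

Lemma det_add_scalar_patch n t (M : 'M[R]_n) :
  \det (t%:M + M) = \sum_(g : {ffun 'I_n -> bool}) \det (patch_mx g t M).
Proof.
pose e (s : 'S_n) i (b : bool) := if b then M i (s i) else t *+ (i == s i).
have expand_row_prod (s : 'S_n) : \prod_i (t%:M + M) i (s i)
    = \sum_(g : {ffun 'I_n -> bool}) \prod_i (patch_mx g t M) i (s i).
  under [RHS]eq_bigr => g _ do
    under eq_bigr => i _ do rewrite mxE -/(e s i (g i)).
  rewrite -bigA_distr_bigA; apply: eq_bigr => i _.
  by rewrite big_bool !mxE /= addrC.
rewrite /determinant; under eq_bigr => s _ do rewrite expand_row_prod mulr_sumr.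
exact: exchange_big.
Qed.

Lemma det_patch_codom_lshift k l (f : 'I_k -> 'I_(k + l)) t (M : 'M[R]_(k + l)) :
  injective f ->
  \det (patch_mx (fun i => i \in codom f) t M) = t ^+ l * \det (mxsub f f M).
Proof.
move=> f_inj; have [p pE] := perm_extend_lshift f_inj.
rewrite -(det_row_col_perm p); set B := row_perm _ _.
have p_rshift i : p (rshift k i) \in codom f = false.
  apply/negbTE/negP => /codomP [x].
  by rewrite -pE => /perm_inj /eqP; rewrite eq_rlshift.
have B_ul : ulsubmx B = mxsub f f M.
  by apply/matrixP => i j; rewrite !mxE !pE codom_f.
have B_dl : dlsubmx B = 0.
  by apply/matrixP => i j; rewrite !mxE p_rshift (inj_eq perm_inj) eq_rlshift.
have B_dr : drsubmx B = t%:M.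
  by apply/matrixP => i j; rewrite !mxE p_rshift (inj_eq perm_inj) eq_rshift.
by rewrite -(submxK B) B_ul B_dl B_dr det_ublock det_scalar mulrC.
Qed.

Lemma det_patch_codom n k (f : 'I_k -> 'I_n) t (M : 'M[R]_n) :
  injective f ->
  \det (patch_mx (fun i => i \in codom f) t M)
    = t ^+ (n - k) * \det (mxsub f f M).
Proof.
move=> f_inj; have kn : (k <= n)%N by have := leq_card _ f_inj; rewrite !card_ord.
move: f M f_inj; rewrite -(subnKC kn) addKn => f M.
exact: det_patch_codom_lshift.
Qed.

End PatchDeterminant.

Local Notation ltI n := (relpre (@nat_of_ord n) ltn).

Lemma ltI_trans n : transitive (ltI n).
Proof. by move=> y x z; apply: ltn_trans. Qed.

Lemma sorted_enum_ltI n (A : {pred 'I_n}) : sorted (ltI n) (enum A).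
Proof.
rewrite /enum_mem -enumT; apply: (sorted_filter (@ltI_trans n)).
by have := iota_ltn_sorted 0 n; rewrite -val_enum_ord sorted_map.
Qed.

Section IncreasingMaps.
Variables k n : nat.
Implicit Types (f : {ffun 'I_k -> 'I_n}) (g : {ffun 'I_n -> bool}).

Lemma incr_inj f : incr f -> injective f.
Proof.
move=> /forallP f_incr i j fij; apply/val_inj/eqP.
case: (ltngtP i j) => // lt_ij.
- by have := implyP (forallP (f_incr i) j) lt_ij; rewrite fij ltnn.
- by have := implyP (forallP (f_incr j) i) lt_ij; rewrite fij ltnn.
Qed.

Lemma incr_sorted f : incr f -> sorted (ltI n) (codom f).
Proof.
move=> /forallP f_incr; rewrite codomE.
apply: (homo_sorted _ _ (sorted_enum_ltI 'I_k)) => i j.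
exact: (implyP (forallP (f_incr i) j)).
Qed.

Definition codom_ind f : {ffun 'I_n -> bool} := [ffun i => i \in codom f].

Lemma codom_ind_inj : {in [set f | incr f] &, injective codom_ind}.
Proof.
move=> f f'; rewrite !inE => f_incr f'_incr eq_ind.
have eq_codom : codom f = codom f'.
  apply: (irr_sorted_eq (@ltI_trans n) (fun i => ltnn i)).
  - exact: incr_sorted.
  - exact: incr_sorted.
  by move=> i; have := congr1 (fun g => g i) eq_ind; rewrite !ffunE.
by apply: (can_inj fgraphK); apply: val_inj; rewrite /= -!codom_ffun.
Qed.

Lemma codom_ind_incrE g :
  (g \in codom_ind @: [set f | incr f]) = (#|[set i | g i]| == k).
Proof.
apply/imsetP/eqP => [[f] | card_g].
  rewrite inE => f_incr ->.
  have -> : [set i | codom_ind f i] = [set i in codom f].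
    by apply/setP => i; rewrite !inE ffunE.
  by rewrite cardsE card_codom ?card_ord //; exact: incr_inj.
set s := enum [set i | g i].
have size_s : size s == k by rewrite /s -cardE card_g.
pose t := Tuple size_s; pose f := [ffun i => tnth t i].
have codom_f : codom f = s.
  rewrite codomE -[RHS](map_tnth_enum t).
  by apply: eq_map => i; rewrite ffunE.
exists f; last by apply/ffunP => i; rewrite ffunE codom_f mem_enum inE.
rewrite inE; apply/forallP => i; apply/forallP => j; apply/implyP => lt_ij.
rewrite !ffunE (tnth_nth (tnth t i) t i) (tnth_nth (tnth t i) t j).
have lt_size (x : 'I_k) : (x : nat) \in [pred m | m < size t]%N.
  by rewrite inE size_tuple.
have t_sorted : sorted (ltI n) t by exact: sorted_enum_ltI.
exact: (sorted_ltn_nth (@ltI_trans n) _ t_sorted _ _ (lt_size i) (lt_size j)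
  lt_ij).
Qed.

End IncreasingMaps.

Section PrincipalMinorSums.
Variable R : comNzRingType.

Lemma det_add_scalar_Tsum n (t : R) (M : 'M[R]_n) :
  \det (t%:M + M) = \sum_(k < n.+1) t ^+ (n - k) * Tsum M k.
Proof.
rewrite det_add_scalar_patch (partition_big
  (fun g : {ffun 'I_n -> bool} => inord #|[set i | g i]| : 'I_n.+1) xpredT) //=.
apply: eq_bigr => k _.
rewrite (eq_bigl (mem (@codom_ind k n @: [set f | incr f]))); last first.
  move=> g; rewrite /= codom_ind_incrE -val_eqE /= inordK //.
  by rewrite ltnS -[X in (_ <= X)%N](card_ord n) max_card.
rewrite big_imset /=; last exact: codom_ind_inj.
rewrite /Tsum mulr_sumr; apply: eq_big => [f | f]; first by rewrite inE.
rewrite inE => f_incr.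
have -> : patch_mx (codom_ind f) t M = patch_mx (fun i => i \in codom f) t M.
  by apply/matrixP => i j; rewrite !mxE ffunE.
by rewrite det_patch_codom //; exact: incr_inj.
Qed.

Lemma Tsum0 n (M : 'M[R]_n) : Tsum M 0 = 1.
Proof.
rewrite /Tsum (eq_bigl xpredT) => [|f]; last by apply/forallP => -[].
under eq_bigr do rewrite /minor det_mx00.
by rewrite sumr_const card_ffun !card_ord expn0.
Qed.

Lemma TsumN n (M : 'M[R]_n) k : Tsum (- M) k = (-1) ^+ k * Tsum M k.
Proof.
rewrite /Tsum mulr_sumr; apply: eq_bigr => f _; rewrite /minor.
have -> : mxsub f f (- M) = - mxsub f f M by apply/matrixP => i j; rewrite !mxE.
by rewrite -scaleN1r detZ.
Qed.

Lemma Tsum_map (S : comNzRingType) (phi : {rmorphism R -> S}) n (M : 'M[R]_n) k :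
  Tsum (map_mx phi M) k = phi (Tsum M k).
Proof.
rewrite /Tsum rmorph_sum; apply: eq_bigr => f _.
by rewrite /minor -map_mxsub det_map_mx.
Qed.

End PrincipalMinorSums.

Lemma char_poly_Tsum0 (R : comNzRingType) n (M : 'M[R]_n) :
  (forall k, (0 < k <= n)%N -> Tsum M k = 0) -> char_poly M = 'X^n.
Proof.
move=> T0; rewrite /char_poly /char_poly_mx det_add_scalar_Tsum big_ord_recl.
rewrite subn0 Tsum0 mulr1 big1 ?addr0 // => k _.
by rewrite TsumN Tsum_map T0 ?rmorph0 ?mulr0 //= ltnS ltn_ord.
Qed.

Section ComplementaryMinors.
Variable R : comNzRingType.

Lemma det_mul_ulsubmx k l (A C : 'M[R]_(k + l)) s :
  A *m C = s%:M -> \det A * \det (ulsubmx C) = s ^+ k * \det (drsubmx A).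
Proof.
move=> AC_scalar.
have : A *m C = block_mx s%:M 0 0 s%:M by rewrite AC_scalar -scalar_mx_block.
rewrite -[A in A *m C]submxK -[C in _ *m C]submxK mulmx_block.
case/eq_block_mx => AC_ul _ AC_dl _.
have : A *m block_mx (ulsubmx C) 0 (dlsubmx C) 1%:M
   = block_mx s%:M (ursubmx A) 0 (drsubmx A).
  by rewrite -[A in LHS]submxK mulmx_block !mulmx0 !mulmx1 !add0r AC_ul AC_dl.
move/(congr1 determinant).
by rewrite det_mulmx det_lblock det_ublock det1 mulr1 det_scalar.
Qed.

Lemma det_mul_mxsub_lshift k l (A C : 'M[R]_(k + l)) s
    (r c : 'I_k -> 'I_(k + l)) :
  injective r -> injective c -> A *m C = s%:M ->
  exists Y, \det A * \det (mxsub r c C) = s ^+ k * Y.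
Proof.
move=> r_inj c_inj AC_scalar.
have [p pE] := perm_extend_lshift r_inj; have [q qE] := perm_extend_lshift c_inj.
set A' := row_perm q (col_perm p A); set C' := row_perm p (col_perm q C).
have A'C' : A' *m C' = s%:M.
  apply/matrixP => i j; rewrite !mxE.
  transitivity ((A *m C) (q i) (q j)).
    rewrite [RHS]mxE [RHS](reindex_inj (@perm_inj _ p)) /=.
    by apply: eq_bigr => m _; rewrite !mxE.
  by rewrite AC_scalar mxE (inj_eq perm_inj).
have -> : mxsub r c C = ulsubmx C'.
  by apply/matrixP => i j; rewrite !mxE pE qE.
pose sg := (-1) ^+ q * (-1) ^+ p : R.
have sgK : sg * sg = 1.
  by rewrite mulrACA -!signr_addb !addbb.
have det_A' : \det A' = sg * \det A.
  rewrite /A' row_permE col_permE !det_mulmx !det_perm odd_permV.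
  by rewrite mulrCA mulrC.
exists (sg * \det (drsubmx A')).
have -> : \det A = sg * \det A' by rewrite det_A' mulrA sgK mul1r.
by rewrite -mulrA (det_mul_ulsubmx A'C') mulrCA.
Qed.

End ComplementaryMinors.

Lemma det_mul_mxsub (R : comNzRingType) n k (A C : 'M[R]_n) s
    (r c : 'I_k -> 'I_n) :
  injective r -> injective c -> A *m C = s%:M ->
  exists Y, \det A * \det (mxsub r c C) = s ^+ k * Y.
Proof.
move=> r_inj; have kn : (k <= n)%N by have := leq_card _ r_inj; rewrite !card_ord.
move: A C r c r_inj; rewrite -(subnKC kn) => A C r c.
exact: det_mul_mxsub_lshift.
Qed.

Lemma det_mxsub_sqr0 (R : comNzRingType) n k (N : 'M[R]_n) (r c : 'I_k -> 'I_n) :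
  (n < k.*2)%N -> N *m N = 0 -> char_poly N = 'X^n ->
  injective r -> injective c -> \det (mxsub r c N) = 0.
Proof.
move=> lt_n_2k NN charN r_inj c_inj.
pose N' := map_mx polyC N.
have sqr_X : ('X%:M - N') *m ('X%:M + N') = ('X^2)%:M.
  rewrite mulmxBl !mulmxDr [N' *m _]scalar_mxC -scalar_mxM -map_mxM NN map_mx0.
  by rewrite addr0 addrK expr2.
have [Y] := det_mul_mxsub r_inj c_inj sqr_X.
rewrite -/(char_poly_mx N) -/(char_poly N) charN -exprM mul2n.
set D := \det _ => XnD.
have D0 : D.[0] = \det (mxsub r c N).
  rewrite -horner_evalE -det_map_mx; congr (\det _); apply/matrixP => i j.
  by rewrite !mxE /= horner_evalE hornerD hornerMn hornerX hornerC mul0rn add0r.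
have := congr1 (fun P : {poly R} => P`_n) XnD.
by rewrite /= !coefXnM ltnn lt_n_2k subnn -D0 horner_coef0.
Qed.

Section IdealMembership.
Variable R : comNzRingType.
Implicit Types (gens : seq R) (x : R).

Lemma in_ideal0 gens : in_ideal gens 0.
Proof.
exists (nseq (size gens) 0); rewrite size_nseq; split => //.
by rewrite big1 // => i _; rewrite nth_nseq if_same mul0r.
Qed.

Lemma in_idealMD gens a u v :
  in_ideal gens u -> in_ideal gens v -> in_ideal gens (a * u + v).
Proof.
move=> [cu [su ->]] [cv [sv ->]].
exists (mkseq (fun i => a * cu`_i + cv`_i) (size gens)); rewrite size_mkseq.
split=> //; rewrite mulr_sumr -big_split; apply: eq_bigr => i _.
by rewrite nth_mkseq // mulrDl mulrA.
Qed.

Lemma in_ideal_mem gens x : x \in gens -> in_ideal gens x.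
Proof.
move=> xg; have ix : (index x gens < size gens)%N by rewrite index_mem.
exists (mkseq (fun i => (i == index x gens)%:R) (size gens)); rewrite size_mkseq.
split=> //; rewrite (bigD1 (Ordinal ix)) //= big1 ?addr0.
  by rewrite nth_mkseq // eqxx mul1r nth_index.
move=> i /eqP ne; rewrite nth_mkseq //.
by case: eqP => [e|]; [case: ne; apply: val_inj | rewrite mul0r].
Qed.

Definition ideal_of gens : {pred R} :=
  fun x => if excluded_middle_informative (in_ideal gens x) then true else false.

Lemma ideal_ofP gens x : reflect (in_ideal gens x) (x \in ideal_of gens).
Proof.
by rewrite unfold_in /ideal_of; case: excluded_middle_informative; constructor.
Qed.

Lemma ideal_of_closed gens : ~ in_ideal gens 1 -> idealr_closed (ideal_of gens).
Proof.
move=> not1; split; first exact/ideal_ofP/in_ideal0.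
  exact/ideal_ofP.
by move=> a u v /ideal_ofP iu /ideal_ofP iv; apply/ideal_ofP/in_idealMD.
Qed.

(* Test in the quotient ring [R / (gens)]; when that quotient would be the zero
   ring, [1] and hence everything lies in the ideal. *)
Lemma in_ideal_rmorph gens x :
  (forall (S : comNzRingType) (phi : {rmorphism R -> S}),
     {in gens, forall g, phi g = 0} -> phi x = 0) ->
  in_ideal gens x.
Proof.
move=> kill; have [one_in|one_out] := classic (in_ideal gens 1).
  by have := in_idealMD x one_in (in_ideal0 gens); rewrite mulr1 addr0.
pose I : idealr R := HB.pack (ideal_of gens)
  (isIdealr.Build _ (ideal_of gens) (ideal_of_closed one_out)).
pose Q := {ideal_quot I}.
have piP y : reflect (\pi_Q y = 0) (y \in I).
  rewrite -[y]subr0 Quotient.idealrBE -(rmorph0 \pi_Q) subr0.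
  exact: eqP.
apply/ideal_ofP/piP/kill => g /in_ideal_mem /ideal_ofP.
exact/piP.
Qed.

End IdealMembership.

Theorem lemma4 (K : fieldType) (n : nat) (hn : (1 <= n)%N)
  (r c : {ffun 'I_(n./2.+1) -> 'I_n}) (hr : incr r) (hc : incr c) :
  in_ideal (lemma4_gens K n) (minor (generic_mx K n) r c).
Proof.
set Phi := generic_mx K n.
apply: in_ideal_rmorph => S phi kill_gens.
have kill_Phi2 i j : phi ((Phi *m Phi) i j) = 0.
  apply: kill_gens; rewrite mem_cat; apply/orP; right.
  by apply/mapP; exists (i, j); rewrite ?mem_enum.
have kill_T k : (0 < k <= n)%N -> phi (Tsum Phi k) = 0.
  case: k => // k /= lt_k_n; apply: kill_gens; rewrite mem_cat; apply/orP; left.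
  by apply/mapP; exists k; rewrite ?mem_iota.
rewrite /minor -det_map_mx map_mxsub.
apply: det_mxsub_sqr0; try exact: incr_inj.
- by have := odd_double_half n; have := leq_b1 (odd n); rewrite doubleS; lia.
- by rewrite -map_mxM; apply/matrixP => i j; rewrite mxE kill_Phi2 mxE.
- by apply: char_poly_Tsum0 => k lt_k_n; rewrite Tsum_map kill_T.
Qed.
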